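(* In the setting of the context, assume $\mathbf{A}$ and $\tilde{\mathbf{A}}$ are invertible. Then the coarse-grid correction of PFASST satisfies the approximation property for large CFL number: there exist $\mu^*>0$ and a constant $c>0$ independent of $\mu$ such that for all $\mu\ge\mu^*$, $$\big\|\mathbf{C}^{-1}-\mathbf{T}_C^F\tilde{\mathbf{P}}^{-1}\mathbf{T}_F^C\big\|\le\frac{c}{\mu}.$$
   Context: Fix positive integers $L,M,N$ and coarse sizes $\tilde M\le M$, $\tilde N\le N$. Let $\mathbf{Q}=(q_{m,j})\in\mathbb{R}^{M\times M}$ with $q_{m,j}=\int_0^{\tau_m}\ell_j(s)\,ds$ be the collocation matrix for the (right) Gauss–Radau nodes $0<\tau_1<\dots<\tau_M=1$ on $[0,1]$ ($\ell_j$ Lagrange basis polynomials). Let $\tilde{\mathbf{Q}}_\Delta\in\mathbb{R}^{\tilde M\times\tilde M}$ be the lower-triangular weight matrix of a simpler quadrature rule on the coarse nodes; as a standing assumption of the stiff-limit analysis, $\tilde{\mathbf{Q}}_\Delta$ is invertible. Let $\mathbf{A}\in\mathbb{C}^{N\times N}$, $\tilde{\mathbf{A}}\in\mathbb{C}^{\tilde N\times\tilde N}$, $\mu>0$. Let $\mathbf{N}_M$ and $\tilde{\mathbf{N}}_{\tilde M}$ be the $M\times M$ and $\tilde M\times\tilde M$ matrices with ones in the last column and zeros elsewhere, $\mathbf{H}=\mathbf{N}_M\otimes\mathbf{I}_N$, $\tilde{\mathbf{H}}=\tilde{\mathbf{N}}_{\tilde M}\otimes\mathbf{I}_{\tilde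 N}$, $\mathbf{E}\in\mathbb{R}^{L\times L}$ with ones on the first subdiagonal and zeros elsewhere. $\mathbf{C}=\mathbf{I}_{LMN}-\mu\,\mathbf{I}_L\otimes\mathbf{Q}\otimes\mathbf{A}-\mathbf{E}\otimes\mathbf{H}$ and $\tilde{\mathbf{P}}=\mathbf{I}_{L\tilde M\tilde N}-\mu\,\mathbf{I}_L\otimes\tilde{\mathbf{Q}}_\Delta\otimes\tilde{\mathbf{A}}-\mathbf{E}\otimes\tilde{\mathbf{H}}$. Restriction $\mathbf{T}_F^C=\mathbf{I}_L\otimes\mathbf{T}_{F,Q}^C\otimes\mathbf{T}_{F,A}^C\in\mathbb{R}^{L\tilde M\tilde N\times LMN}$ and interpolation $\mathbf{T}_C^F=\mathbf{I}_L\otimes\mathbf{T}_{C,Q}^F\otimes\mathbf{T}_{C,A}^F\in\mathbb{R}^{LMN\times L\tilde M\tilde N}$, with $(\mathbf{E}\otimes\tilde{\mathbf{H}})\mathbf{T}_F^C=\mathbf{T}_F^C(\mathbf{E}\otimes\mathbf{H})$. $\|\cdot\|$ is any induced matrix norm. *)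

From HB Require Import structures.
From mathcomp Require Import all_boot all_order all_algebra.
From mathcomp Require Import all_classical all_reals all_analysis.
From mathcomp.real_closed Require Export complex mxtens.

Set Implicit Arguments.
Unset Strict Implicit.
Unset Printing Implicit Defensive.

Import Order.TTheory GRing.Theory Num.Theory.
Local Open Scope ring_scope.

Section Defs.
Variable R : realType.
Local Notation C := (R[i]).

(* Legendre polynomials on [-1,1]: pair (P_n, P_{n+1}), via Bonnet's recursion
   (n+2) P_{n+2} = (2n+3) X P_{n+1} - (n+1) P_n. *)
Fixpoint legendre_pair (n : nat) : {poly R} * {poly R} :=
  match n with
  | 0 => (1, 'X)
  | n'.+1 =>
      let (p0, p1) := legendre_pair n' in
      (p1, ((2 * n' + 3)%:R / (n' + 2)%:R) *: ('X * p1)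
            - ((n' + 1)%:R / (n' + 2)%:R) *: p0)
  end.

Definition legendre (n : nat) : {poly R} := (legendre_pair n).1.

(* Right Gauss-Radau polynomial on [-1,1] (its M roots include x = 1). *)
Definition radau_poly (M : nat) : {poly R} := legendre M - legendre M.-1.

Definition right_radau_nodes (M : nat) (tau : 'I_M -> R) : Prop :=
  (forall i j : 'I_M, (i < j)%N -> tau i < tau j) /\
  (forall m : 'I_M, root (radau_poly M) (2 * tau m - 1)).

Definition lagrange_basis (M : nat) (tau : 'I_M -> R) (j : 'I_M) (s : R) : R :=
  \prod_(k < M | k != j) ((s - tau k) / (tau j - tau k)).

Definition colloc_Q (M : nat) (tau : 'I_M -> R) : 'M[R]_M :=
  \matrix_(m, j) Rintegral (@lebesgue_measure R) `[0, tau m]%classic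
                           (lagrange_basis tau j).

Definition cmx (m n : nat) (X : 'M[R]_(m, n)) : 'M[C]_(m, n) :=
  map_mx (real_complex R) X.

Definition lastcol_mx (n : nat) : 'M[R]_n :=
  \matrix_(i, j) (nat_of_ord j == n.-1)%:R.

Definition subdiag_mx (n : nat) : 'M[R]_n :=
  \matrix_(i, j) (nat_of_ord i == (nat_of_ord j).+1)%:R.

(* E (x) H = E (x) (N_M (x) I_N), written with left-nested Kronecker products
   (E (x) N_M) (x) I_N, which is the same matrix. *)
Definition EH (L M N : nat) : 'M[C]_(L * M * N) :=
  (cmx (subdiag_mx L) *t cmx (lastcol_mx M)) *t (1%:M : 'M[C]_N).

Definition C_op (L M N : nat) (mu : R) (Q : 'M[R]_M) (A : 'M[C]_N)
  : 'M[C]_(L * M * N) :=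
  1%:M - (real_complex R mu) *: ((cmx (1%:M : 'M[R]_L) *t cmx Q) *t A)
       - EH L M N.

Definition transfer (L m1 m2 n1 n2 : nat) (TQ : 'M[R]_(m1, m2))
  (TA : 'M[R]_(n1, n2)) : 'M[C]_(L * m1 * n1, L * m2 * n2) :=
  (cmx (1%:M : 'M[R]_L) *t cmx TQ) *t cmx TA.

Definition is_vnorm (n : nat) (nu : 'cV[C]_n -> R) : Prop :=
  [/\ (forall x, 0 <= nu x),
      (forall x, nu x = 0 -> x = 0),
      (forall (a : C) x, nu (a *: x) = Normc.normc a * nu x) &
      (forall x y, nu (x + y) <= nu x + nu y)].

Definition induced_norm (n : nat) (nu : 'cV[C]_n -> R) (X : 'M[C]_n) : R :=
  sup [set nu (X *m x) / nu x | x in [set x : 'cV[C]_n | x != 0]]%classic.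

End Defs.

From HB Require Import structures.
From mathcomp Require Import all_boot all_order all_algebra.
From mathcomp Require Import all_classical all_reals all_analysis.
From mathcomp.real_closed Require Import complex mxtens.
From mathcomp Require Import ring lra zify.

Import Order.TTheory GRing.Theory Num.Theory.
Import numFieldNormedType.Exports.
Local Open Scope ring_scope.
Set Implicit Arguments.
Unset Strict Implicit.
Unset Printing Implicit Defensive.

(* Both C and P~ have the form B - mu K with K = I_L (x) Q (x) A invertible.
   For the collocation matrix Q this holds because the Radau nodes are positive
   (by Bonnet's recursion, P_M - P_(M-1) has no root <= -1): if Q v = 0, the
   antiderivative of sum_j v_j l_j vanishing at 0 has degree <= M and the
   M + 1 distinct roots 0, tau_1, ..., tau_M, so sum_j v_j l_j = 0 and v = 0.
   For such B - mu K the identity mu y = K^-1 (B y - (B - mu K) y) gives, in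
   the entrywise l1 norm, mu |y| <= |K^-1| (|B| |y| + |(B - mu K) y|), hence
   |(B - mu K)^-1| <= c / mu once mu >= 2 |K^-1| |B| + 1.  The triangle
   inequality then bounds C^-1 - T_C^F P~^-1 T_F^C by c / mu in that norm, and
   equivalence of norms on C^n (compactness of the unit sphere of R^2n)
   transfers the bound to every induced norm. *)

Local Notation normc := Normc.normc.

Section EntrywiseNorm.
Local Open Scope complex_scope.
Variable R : realType.
Local Notation C := R[i].
Implicit Types (z : C) (r : R).

Lemma normc_ge0 z : 0 <= normc z.
Proof. by case: z => a b; exact: sqrtr_ge0. Qed.

Lemma normc_real r : normc r%:C = `|r|.
Proof. by rewrite /= expr0n /= addr0 sqrtr_sqr. Qed.

Lemma normc_sum (I : Type) (s : seq I) (F : I -> C) :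
  normc (\sum_(i <- s) F i) <= \sum_(i <- s) normc (F i).
Proof.
elim/big_ind2: _ => [|z1 r1 z2 r2 h1 h2|//]; first by rewrite Normc.normc0.
exact: le_trans (le_normcD _ _) (lerD h1 h2).
Qed.

Lemma normc_le_ReIm z : normc z <= `|complex.Re z| + `|complex.Im z|.
Proof.
case: z => a b /=.
rewrite -ler_sqr ?nnegrE ?sqrtr_ge0 ?addr_ge0 // sqr_sqrtr ?addr_ge0 ?sqr_ge0 //.
rewrite sqrrD !real_normK ?num_real // lerD2r lerDl.
by rewrite mulrn_wge0 // mulr_ge0.
Qed.

Definition vnorm1 n (x : 'cV[C]_n) : R := \sum_i normc (x i 0).

Definition mxnorm1 m n (Z : 'M[C]_(m, n)) : R := \sum_i \sum_j normc (Z i j).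

Lemma vnorm1_ge0 n (x : 'cV[C]_n) : 0 <= vnorm1 x.
Proof. by apply: sumr_ge0 => i _; exact: normc_ge0. Qed.

Lemma mxnorm1_ge0 m n (Z : 'M[C]_(m, n)) : 0 <= mxnorm1 Z.
Proof. by apply: sumr_ge0 => i _; apply: sumr_ge0 => j _; exact: normc_ge0. Qed.

Lemma vnorm10 n : vnorm1 (0 : 'cV[C]_n) = 0.
Proof. by apply: big1 => i _; rewrite mxE Normc.normc0. Qed.

Lemma vnorm1D n (x y : 'cV[C]_n) : vnorm1 (x + y) <= vnorm1 x + vnorm1 y.
Proof. by rewrite -big_split; apply: ler_sum => i _; rewrite mxE le_normcD. Qed.

Lemma vnorm1N n (x : 'cV[C]_n) : vnorm1 (- x) = vnorm1 x.
Proof. by apply: eq_bigr => i _; rewrite mxE normcN. Qed.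

Lemma vnorm1B n (x y : 'cV[C]_n) : vnorm1 (x - y) <= vnorm1 x + vnorm1 y.
Proof. by rewrite -(vnorm1N y) vnorm1D. Qed.

Lemma vnorm1Z n z (x : 'cV[C]_n) : vnorm1 (z *: x) = normc z * vnorm1 x.
Proof. by rewrite /vnorm1 mulr_sumr; apply: eq_bigr => i _; rewrite mxE Normc.normcM. Qed.

Lemma vnorm1_eq0 n (x : 'cV[C]_n) : vnorm1 x = 0 -> x = 0.
Proof.
move=> /eqP; rewrite psumr_eq0 => [/allP x0|i _]; last exact: normc_ge0.
apply/matrixP => i j; rewrite ord1 mxE; apply: Normc.eq0_normc.
by apply/eqP/x0; rewrite mem_index_enum.
Qed.

Lemma normc_le_vnorm1 n (x : 'cV[C]_n) i : normc (x i 0) <= vnorm1 x.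
Proof.
rewrite /vnorm1 (bigD1 i) //= lerDl.
by apply: sumr_ge0 => k _; exact: normc_ge0.
Qed.

Lemma vnorm1_mulmx m n (Z : 'M[C]_(m, n)) (x : 'cV[C]_n) :
  vnorm1 (Z *m x) <= mxnorm1 Z * vnorm1 x.
Proof.
rewrite /vnorm1 mulr_suml; apply: ler_sum => i _; rewrite mxE mulr_suml.
apply: le_trans (normc_sum _ _) _; apply: ler_sum => j _.
by rewrite Normc.normcM ler_wpM2l ?normc_ge0 ?normc_le_vnorm1.
Qed.

End EntrywiseNorm.

Lemma ker0_unitmx (F : fieldType) n (Z : 'M[F]_n) :
  (forall y : 'cV_n, Z *m y = 0 -> y = 0) -> Z \in unitmx.
Proof.
move=> Zinj; rewrite unitmxE unitfE -det_tr; apply/negP => /det0P[v v0 vZ].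
have /Zinj vT0 : Z *m v^T = 0 by rewrite -[Z]trmxK -trmx_mul vZ trmx0.
by move: v0; rewrite -[v]trmxK vT0 trmx0 eqxx.
Qed.

Lemma tensmx11 (R : comPzRingType) m n :
  (1%:M : 'M[R]_m) *t (1%:M : 'M[R]_n) = 1%:M.
Proof.
apply/matrixP => i j.
case: (mxtens_indexP i) => i1 i2; case: (mxtens_indexP j) => j1 j2.
by rewrite tensmxE !mxE (can_eq (@mxtens_indexK _ _)) xpair_eqE -natrM mulnb.
Qed.

Lemma tensmx_unitmx (R : comUnitRingType) m n (A : 'M[R]_m) (B : 'M[R]_n) :
  A \in unitmx -> B \in unitmx -> A *t B \in unitmx.
Proof.
move=> Au Bu; have AB1 : (A *t B) *m (invmx A *t invmx B) = 1%:M.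
  by rewrite tensmx_mul !mulmxV // tensmx11.
by case: (mulmx1_unit AB1).
Qed.

Section StiffInverse.
Variable R : realType.
Local Notation C := R[i].
Local Open Scope complex_scope.

Lemma vnorm1_inverse_bound n (Z : 'M[C]_n) (c : R) :
  (forall y, vnorm1 y <= c * vnorm1 (Z *m y)) ->
  Z \in unitmx /\ forall x, vnorm1 (invmx Z *m x) <= c * vnorm1 x.
Proof.
move=> Zlow; have Zu : Z \in unitmx.
  apply: ker0_unitmx => y Zy; apply: vnorm1_eq0; apply/eqP.
  by rewrite eq_le vnorm1_ge0 andbT; have := Zlow y; rewrite Zy vnorm10 mulr0.
by split=> // x; have := Zlow (invmx Z *m x); rewrite mulKVmx.
Qed.

Lemma stiff_apriori_bound n (B K : 'M[C]_n) (mu : R) (y : 'cV_n) :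
  K \in unitmx -> 0 < mu ->
  mu * vnorm1 y <=
    mxnorm1 (invmx K) * (mxnorm1 B * vnorm1 y + vnorm1 ((B - mu%:C *: K) *m y)).
Proof.
move=> Ku mu0.
have -> : mu * vnorm1 y = vnorm1 (invmx K *m (B *m y - (B - mu%:C *: K) *m y)).
  rewrite mulmxBl opprB addrCA subrr addr0 -scalemxAl -scalemxAr mulmxA.
  by rewrite mulVmx // mul1mx vnorm1Z normc_real gtr0_norm.
apply: le_trans (vnorm1_mulmx _ _) _; rewrite ler_wpM2l ?mxnorm1_ge0 //.
by apply: le_trans (vnorm1B _ _) _; rewrite lerD2r vnorm1_mulmx.
Qed.

Lemma stiff_inverse_bound n (B K : 'M[C]_n) : K \in unitmx ->
  exists mu0 c : R, [/\ 0 < mu0, 0 < c & forall mu, mu0 <= mu ->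
    B - mu%:C *: K \in unitmx /\
    forall x, vnorm1 (invmx (B - mu%:C *: K) *m x) <= c / mu * vnorm1 x].
Proof.
move=> Ku; set a := mxnorm1 (invmx K); set b := mxnorm1 B.
have a0 : 0 <= a := mxnorm1_ge0 _; have b0 : 0 <= b := mxnorm1_ge0 _.
have ab0 : 0 <= a * b by rewrite mulr_ge0.
exists (2 * (a * b) + 1), (2 * a + 1); split; [lra | lra | move=> mu mu_ge].
have mu0 : 0 < mu by lra.
apply: vnorm1_inverse_bound => y; rewrite mulrAC ler_pdivlMr //.
have := stiff_apriori_bound B y Ku mu0; rewrite -/a -/b.
have := vnorm1_ge0 y; have := vnorm1_ge0 ((B - mu%:C *: K) *m y).
nra.
Qed.

Lemma coarse_correction_bound n p (B1 K1 : 'M[C]_n) (B2 K2 : 'M[C]_p)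
    (T1 : 'M[C]_(n, p)) (T2 : 'M[C]_(p, n)) :
  K1 \in unitmx -> K2 \in unitmx ->
  exists mu0 c : R, [/\ 0 < mu0, 0 < c & forall mu, mu0 <= mu ->
    [/\ B1 - mu%:C *: K1 \in unitmx, B2 - mu%:C *: K2 \in unitmx &
      forall x, vnorm1 ((invmx (B1 - mu%:C *: K1)
                        - T1 *m invmx (B2 - mu%:C *: K2) *m T2) *m x)
                <= c / mu * vnorm1 x]].
Proof.
move=> K1u K2u.
have [mu1 [c1 [mu1_0 c1_0 inv1]]] := stiff_inverse_bound B1 K1u.
have [mu2 [c2 [mu2_0 c2_0 inv2]]] := stiff_inverse_bound B2 K2u.
set c := c1 + mxnorm1 T1 * c2 * mxnorm1 T2.
have c_ge : c1 <= c by rewrite lerDl !mulr_ge0 ?mxnorm1_ge0 // ltW.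
exists (mu1 + mu2), c; split=> [||mu mu_ge]; [exact: addr_gt0 | exact: lt_le_trans c_ge|].
have mu0 : 0 < mu by lra.
have [C1u C1inv] := inv1 mu ltac:(lra); have [C2u C2inv] := inv2 mu ltac:(lra).
split=> // x; rewrite mulmxBl -!mulmxA; apply: le_trans (vnorm1B _ _) _.
have T1C2T2 : vnorm1 (T1 *m (invmx (B2 - mu%:C *: K2) *m (T2 *m x)))
    <= mxnorm1 T1 * (c2 / mu * (mxnorm1 T2 * vnorm1 x)).
  apply: le_trans (vnorm1_mulmx _ _) _; apply: ler_wpM2l; first exact: mxnorm1_ge0.
  apply: le_trans (C2inv _) _; apply: ler_wpM2l; last exact: vnorm1_mulmx.
  by rewrite divr_ge0 // ltW.
apply: le_trans (lerD (C1inv x) T1C2T2) _.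
rewrite [leRHS](_ : _ = c1 / mu * vnorm1 x
                       + mxnorm1 T1 * (c2 / mu * (mxnorm1 T2 * vnorm1 x))) //.
by rewrite /c; field; rewrite gt_eqF.
Qed.

End StiffInverse.

Lemma lipschitz_continuous (R : realType) (V : normedModType R) (f : V -> R) (k : R) :
  (forall v w, `|f v - f w| <= k * `|v - w|) -> continuous f.
Proof.
move=> flip x; apply/cvgrPdist_le => e e0.
have k1 : 0 < `|k| + 1 by rewrite ltr_wpDl.
near=> v; apply: le_trans (flip x v) _.
apply: le_trans (ler_wpM2r (normr_ge0 _) (ler_norm k)) _.
apply: (@le_trans _ _ ((`|k| + 1) * (e / (`|k| + 1)))); last first.
  by rewrite mulrC divfK ?gt_eqF.
apply: ler_pM => //; first by rewrite lerDl.
near: v; exact: (cvgr_dist_le id x cvg_id _ (divr_gt0 e0 k1)).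
Unshelve. all: by end_near. Qed.

Section Sphere.
Variables (R : realType) (k : nat).
Local Open Scope classical_set_scope.

Definition unit_sphere := [set v : 'rV[R]_k | `|v| = 1].

Lemma compact_unit_sphere : compact unit_sphere.
Proof.
apply: bounded_closed_compact.
  by exists 1; split=> // r r1 v /= ->; exact: ltW.
have -> : unit_sphere = Num.norm @^-1` [set 1] by [].
by apply: preimage_closed; [move=> v _; exact: norm_continuous | exact: closed_eq].
Qed.

Lemma unit_sphere_lower_bound (f : 'rV[R]_k -> R) :
  continuous f -> (forall v, `|v| = 1 -> 0 < f v) ->
  exists2 d, 0 < d & forall v, `|v| = 1 -> d <= f v.
Proof.
move=> fc fpos; have [[v0 v0S]|S0] := pselect (unit_sphere !=set0); last first.
  by exists 1 => // v vS; case: S0; exists v.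
have [c cS cmin] := EVT_min_rV (ex_intro _ v0 v0S) compact_unit_sphere (continuous_subspaceT fc).
rewrite inE in cS; exists (f c); first exact: fpos.
by move=> v vS; apply: cmin; rewrite inE.
Qed.

End Sphere.

Section RealCoordinates.
Local Open Scope complex_scope.
Variables (R : realType) (n : nat).

Definition cvec_of_rV (v : 'rV[R]_(n + n)) : 'cV[R[i]]_n :=
  \col_i (v 0 (lshift n i) +i* v 0 (rshift n i)).

Definition rV_of_cvec (x : 'cV[R[i]]_n) : 'rV[R]_(n + n) :=
  row_mx (\row_i complex.Re (x i 0)) (\row_i complex.Im (x i 0)).

Lemma rV_of_cvecK : cancel rV_of_cvec cvec_of_rV.
Proof.
move=> x; apply/matrixP => i j; rewrite ord1 mxE /rV_of_cvec row_mxEl row_mxEr !mxE.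
by case: (x i 0).
Qed.

Lemma cvec_of_rV0 : cvec_of_rV 0 = 0.
Proof. by apply/matrixP => i j; rewrite !mxE. Qed.

Lemma cvec_of_rVB v w : cvec_of_rV (v - w) = cvec_of_rV v - cvec_of_rV w.
Proof. by apply/matrixP => i j; rewrite !mxE. Qed.

Lemma cvec_of_rVZ (r : R) v : cvec_of_rV (r *: v) = r%:C *: cvec_of_rV v.
Proof. by apply/matrixP => i j; rewrite !mxE /=; simpc. Qed.

Lemma cvec_of_rV_eq0 v : cvec_of_rV v = 0 -> v = 0.
Proof.
move=> v0; apply/matrixP => i j; rewrite ord1 [RHS]mxE -(splitK j).
case: (fintype.split j) => k /=.
  by have := congr1 (fun x : 'cV_n => complex.Re (x k 0)) v0; rewrite !mxE.
by have := congr1 (fun x : 'cV_n => complex.Im (x k 0)) v0; rewrite !mxE.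
Qed.

Lemma vnorm1_cvec_of_rV v : vnorm1 (cvec_of_rV v) <= n%:R * 2 * `|v|.
Proof.
have entry_le j : `|v 0 j| <= `|v|.
  by rewrite [leRHS]/Num.norm /= mx_normrE; apply/bigmax_geP; right; exists (0, j).
have entry2_le i : normc (cvec_of_rV v i 0) <= 2 * `|v|.
  apply: le_trans (normc_le_ReIm _) _; rewrite !mxE /=.
  by have := entry_le (lshift n i); have := entry_le (rshift n i); lra.
apply: le_trans (ler_sum _ (fun i _ => entry2_le i)) _.
by rewrite sumr_const card_ord -[_ *+ n]mulr_natl mulrA.
Qed.

End RealCoordinates.

Section NormEquivalence.
Local Open Scope complex_scope.
Variables (R : realType) (n : nat) (nu : 'cV[R[i]]_n -> R).
Hypothesis nuP : is_vnorm nu.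

Lemma vnorm_ge0 x : 0 <= nu x. Proof. by case: nuP. Qed.

Lemma vnorm_eq0 x : nu x = 0 -> x = 0. Proof. by case: nuP => _ + _ _; apply. Qed.

Lemma vnormZ a x : nu (a *: x) = normc a * nu x. Proof. by case: nuP. Qed.

Lemma vnormD x y : nu (x + y) <= nu x + nu y. Proof. by case: nuP. Qed.

Lemma vnorm0 : nu 0 = 0.
Proof. by rewrite -(scale0r 0) vnormZ Normc.normc0 mul0r. Qed.

Lemma vnormN x : nu (- x) = nu x.
Proof. by rewrite -scaleN1r vnormZ normcN Normc.normc1 mul1r. Qed.

Lemma vnorm_sum (I : Type) (s : seq I) (F : I -> 'cV_n) :
  nu (\sum_(i <- s) F i) <= \sum_(i <- s) nu (F i).
Proof.
elim/big_ind2: _ => [|x1 r1 x2 r2 h1 h2|//]; first by rewrite vnorm0.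
exact: le_trans (vnormD _ _) (lerD h1 h2).
Qed.

Lemma ler_dist_vnorm x y : `|nu x - nu y| <= nu (x - y).
Proof.
have Dx := vnormD (x - y) y; have Dy := vnormD (y - x) x.
rewrite subrK in Dx; rewrite subrK -opprB vnormN in Dy.
by rewrite ler_norml; apply/andP; split; lra.
Qed.

Lemma vnorm_le_vnorm1 : exists2 c, 0 < c & forall x, nu x <= c * vnorm1 x.
Proof.
pose e i : 'cV[R[i]]_n := delta_mx i 0; pose E := \sum_i nu (e i).
have E0 : 0 <= E by apply: sumr_ge0 => i _; exact: vnorm_ge0.
exists (E + 1) => [|x]; first lra.
have xE : x = \sum_i x i 0 *: e i.
  by rewrite {1}(matrix_sum_delta x); apply: eq_bigr => i _; rewrite big_ord1.
rewrite {1}xE; apply: le_trans (vnorm_sum _ _) _; rewrite /vnorm1 mulr_sumr.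
apply: ler_sum => i _; rewrite vnormZ mulrC ler_wpM2r ?normc_ge0 //.
rewrite -[nu (e i)]addr0 lerD // /E (bigD1 i) //= lerDl.
by apply: sumr_ge0 => j _; exact: vnorm_ge0.
Qed.

Lemma continuous_vnorm_cvec_of_rV : continuous (nu \o @cvec_of_rV R n).
Proof.
have [c c0 nu_le] := vnorm_le_vnorm1.
apply: (@lipschitz_continuous _ _ _ (c * (n%:R * 2))) => v w /=.
apply: le_trans (ler_dist_vnorm _ _) _; rewrite -cvec_of_rVB -mulrA.
by apply: le_trans (nu_le _) _; rewrite ler_wpM2l ?vnorm1_cvec_of_rV // ltW.
Qed.

Lemma vnorm1_le_vnorm : exists2 c, 0 < c & forall x, vnorm1 x <= c * nu x.
Proof.
have [|d d0 d_le] := unit_sphere_lower_bound continuous_vnorm_cvec_of_rV.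
  move=> v v1; rewrite lt_def vnorm_ge0 andbT; apply/eqP => /vnorm_eq0/cvec_of_rV_eq0 v0.
  by move: v1; rewrite v0 normr0 => /eqP; rewrite eq_sym oner_eq0.
have n20 : 0 <= n%:R * 2 :> R by rewrite mulr_ge0.
exists (n%:R * 2 / d + 1) => [|x]; first by rewrite ltr_wpDl // divr_ge0 // ltW.
have [->|x0] := eqVneq x 0; first by rewrite vnorm10 vnorm0 mulr0.
set v := rV_of_cvec x; have v0 : 0 < `|v|.
  rewrite normr_gt0; apply: contra x0 => /eqP v0.
  by rewrite -(rV_of_cvecK x) -/v v0 cvec_of_rV0.
have dv : d * `|v| <= nu x.
  have /d_le : `| `|v|^-1 *: v | = 1 by rewrite normrZ normfV normr_id mulVf ?gt_eqF.
  rewrite /= cvec_of_rVZ vnormZ normc_real rV_of_cvecK ger0_norm; last by rewrite invr_ge0.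
  by rewrite mulrC ler_pdivlMr.
rewrite -{1}(rV_of_cvecK x) -/v; apply: le_trans (vnorm1_cvec_of_rV v) _.
have q0 : 0 <= n%:R * 2 / d by rewrite divr_ge0 // ltW.
have qd : n%:R * 2 = n%:R * 2 / d * d by rewrite divfK ?gt_eqF.
move: q0 qd (vnorm_ge0 x); set q := _ / d; set n2 := n%:R * 2; nra.
Qed.

Lemma induced_norm_le (X : 'M[R[i]]_n) (k : R) : 0 <= k ->
  (forall x, nu (X *m x) <= k * nu x) -> induced_norm nu X <= k.
Proof.
move=> k0 Xk; rewrite /induced_norm; set S := (X in sup X).
have [Sne|S0] := pselect (S !=set0)%classic; last first.
  have -> : S = set0%classic by apply/seteqP; split=> // r Sr; apply: S0; exists r.
  by rewrite sup0.
apply: ge_sup => // _ [x x0 <-].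
have nx : 0 < nu x.
  by rewrite lt_def vnorm_ge0 andbT; apply: contra x0 => /eqP/vnorm_eq0 ->.
by rewrite ler_pdivrMr.
Qed.

Lemma induced_norm_le_vnorm1 : exists2 e, 0 < e & forall X k, 0 <= k ->
  (forall x, vnorm1 (X *m x) <= k * vnorm1 x) -> induced_norm nu X <= e * k.
Proof.
have [a a0 nu_le] := vnorm_le_vnorm1; have [b b0 v1_le] := vnorm1_le_vnorm.
exists (a * b) => [|X k k0 Xk]; first exact: mulr_gt0.
apply: induced_norm_le => [|x]; first by rewrite !mulr_ge0 // ltW.
apply: le_trans (nu_le _) _; apply: le_trans (ler_wpM2l (ltW a0) (Xk x)) _.
by rewrite [a * b * k]mulrAC -!mulrA ler_pM2l // ler_wpM2l ?v1_le.
Qed.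

End NormEquivalence.

Section RadauNodes.
Variable R : realType.

Lemma bonnet_step_ge (b y u w : R) : 0 <= b -> 1 <= y -> 1 <= u <= w ->
  w <= (1 + b) * y * w - b * u.
Proof.
move=> b0 y1 /andP[u1 uw].
have -> : (1 + b) * y * w - b * u = w + ((1 + b) * (y - 1) * w + b * (w - u)) by ring.
by rewrite lerDl addr_ge0 // !mulr_ge0 //; lra.
Qed.

Lemma legendre_pair_alternating_ge1 (x : R) n : x <= -1 ->
  1 <= (-1) ^+ n * (legendre_pair R n).1.[x] <= (-1) ^+ n.+1 * (legendre_pair R n).2.[x].
Proof.
move=> x_le; elim: n => [|n]; first by rewrite /= !hornerE expr1; lra.
rewrite /=; case: (legendre_pair R n) => p0 p1 /= /andP[u1 uw].
apply/andP; split; first exact: le_trans uw.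
set b : R := (n + 1)%:R / (n + 2)%:R.
have -> : (2 * n + 3)%:R / (n + 2)%:R = 1 + b :> R.
  have : (n + 2)%:R != 0 :> R by rewrite pnatr_eq0 addn2.
  by rewrite /b !natrD => n2; field.
have b0 : 0 <= b by rewrite /b divr_ge0.
rewrite [X in _ <= X](_ : _ =
    (1 + b) * - x * ((-1) ^+ n.+1 * p1.[x]) - b * ((-1) ^+ n * p0.[x])).
  by apply: bonnet_step_ge => //; [lra | apply/andP].
by rewrite hornerD hornerN !hornerZ ['X * _]mulrC hornerMX !exprS; ring.
Qed.

Lemma radau_poly_neq0 M (x : R) : (0 < M)%N -> x <= -1 -> (radau_poly R M).[x] != 0.
Proof.
case: M => // k _ x_le; rewrite /radau_poly /legendre /=.
have := legendre_pair_alternating_ge1 k x_le; case: (legendre_pair R k) => p0 p1 /=.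
rewrite hornerD hornerN exprS mulN1r mulNr => /andP[p0_ge1 p01].
by apply: contraTneq p01 => /eqP; rewrite subr_eq0 => /eqP ->; rewrite -ltNge; lra.
Qed.

Lemma right_radau_nodes_gt0 M (tau : 'I_M -> R) :
  right_radau_nodes tau -> forall m, 0 < tau m.
Proof.
case=> _ tau_root m; rewrite ltNge; apply: contraL (tau_root m) => tau_le.
by apply: radau_poly_neq0; [exact: leq_ltn_trans (ltn_ord m) | lra].
Qed.

End RadauNodes.

Section Antiderivative.
Variable R : realType.
Implicit Type p : {poly R}.

Definition antideriv p : {poly R} :=
  \poly_(i < (size p).+1) (if i is j.+1 then p`_j / j.+1%:R else 0).

Lemma deriv_antideriv p : (antideriv p)^`() = p.
Proof.
apply/polyP => i; rewrite coef_deriv coef_poly ltnS.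
case: ltnP => [_|hi]; first by rewrite -[LHS]mulr_natr divfK // pnatr_eq0.
by rewrite mul0rn nth_default.
Qed.

Lemma horner0_antideriv p : (antideriv p).[0] = 0.
Proof. by rewrite horner_coef0 coef_poly. Qed.

Lemma size_antideriv p : (size (antideriv p) <= (size p).+1)%N.
Proof. exact: size_poly. Qed.

Lemma Rintegral_horner p (t : R) : 0 < t ->
  Rintegral lebesgue_measure `[0, t]%classic (horner p) = (antideriv p).[t].
Proof.
move=> t0; rewrite /Rintegral (@continuous_FTC2 _ _ (horner (antideriv p))) //.
- by rewrite horner0_antideriv sube0.
- exact/continuous_subspaceT/continuous_horner.
- split; first by move=> x _; exact: derivable_horner.
  + by apply: cvg_at_right_filter; exact: continuous_horner.
  + by apply: cvg_at_left_filter; exact: continuous_horner.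
- by move=> x _; rewrite -derivE deriv_antideriv.
Qed.

End Antiderivative.

Section Collocation.
Variables (R : realType) (M : nat) (tau : 'I_M -> R).
Hypothesis tauP : right_radau_nodes tau.

Definition lagrange_poly (j : 'I_M) : {poly R} :=
  \prod_(k < M | k != j) ((tau j - tau k)^-1 *: ('X - (tau k)%:P)).

Lemma horner_lagrange_poly j s : (lagrange_poly j).[s] = lagrange_basis tau j s.
Proof.
rewrite /lagrange_poly horner_prod; apply: eq_bigr => k _.
by rewrite hornerZ hornerXsubC mulrC.
Qed.

Lemma size_lagrange_poly j : (size (lagrange_poly j) <= M)%N.
Proof.
apply: leq_trans (size_poly_prod_leq _ _) _.
have card_j : #|[pred k : 'I_M | k != j]| = M.-1 by rewrite cardC1 card_ord.
apply: leq_trans (_ : (\sum_(k < M | k != j) 2).+1 - M.-1 <= M)%N.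
  rewrite card_j leq_sub2r // ltnS leq_sum // => k _.
  by apply: leq_trans (size_scale_leq _ _) _; rewrite size_XsubC.
by rewrite sum_nat_const card_j; have := ltn_ord j; lia.
Qed.

Lemma right_radau_nodes_inj : injective tau.
Proof.
case: tauP => tau_lt _ i j tau_ij.
by case: (ltngtP i j) => [/tau_lt|/tau_lt|/val_inj //]; rewrite tau_ij ltxx.
Qed.

Lemma lagrange_basis_node i j : lagrange_basis tau j (tau i) = (i == j)%:R.
Proof.
rewrite /lagrange_basis; case: eqP => [->|/eqP ij].
  apply: big1 => k kj; rewrite divff // subr_eq0.
  by apply: contra kj => /eqP/right_radau_nodes_inj ->.
by rewrite (bigD1 i) //= subrr !mul0r.
Qed.

Lemma horner_lagrange_comb (c : 'I_M -> R) k :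
  (\sum_j c j *: lagrange_poly j).[tau k] = c k.
Proof.
rewrite horner_sum (bigD1 k) //= big1 => [|j jk].
  by rewrite addr0 hornerZ horner_lagrange_poly lagrange_basis_node eqxx mulr1.
by rewrite hornerZ horner_lagrange_poly lagrange_basis_node eq_sym (negbTE jk) mulr0.
Qed.

Lemma colloc_QE m j : colloc_Q tau m j = (antideriv (lagrange_poly j)).[tau m].
Proof.
rewrite mxE -Rintegral_horner; last exact: right_radau_nodes_gt0.
by congr Rintegral; apply/funext => s; rewrite horner_lagrange_poly.
Qed.

Lemma colloc_Q_unitmx : colloc_Q tau \in unitmx.
Proof.
apply: ker0_unitmx => v Qv0.
pose P := \sum_j v j 0 *: antideriv (lagrange_poly j).
have P0 : P = 0.
  apply: (@roots_geq_poly_eq0 _ _ (0 :: [seq tau m | m <- enum 'I_M])).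
  - apply/andP; split.
      by rewrite rootE horner_sum big1 // => j _; rewrite hornerZ horner0_antideriv mulr0.
    apply/allP => _ /mapP[m _ ->]; rewrite rootE horner_sum.
    have /matrixP/(_ m 0) := Qv0; rewrite !mxE => Qm0.
    by apply/eqP; rewrite -[RHS]Qm0; apply: eq_bigr => j _; rewrite hornerZ colloc_QE mulrC.
  - rewrite /= map_inj_uniq ?enum_uniq ?andbT; last exact: right_radau_nodes_inj.
    by apply/mapP => -[m _ /esym]; apply/eqP; rewrite gt_eqF // right_radau_nodes_gt0.
  - rewrite /= size_map size_enum_ord /P.
    elim/big_ind: _ => [|p q|j _]; first by rewrite size_poly0.
      by move=> hp hq; rewrite (leq_trans (size_polyD _ _)) // geq_max hp hq.
    apply: leq_trans (size_scale_leq _ _) _.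
    by apply: leq_trans (size_antideriv _) _; rewrite ltnS size_lagrange_poly.
have : \sum_j v j 0 *: lagrange_poly j = 0.
  transitivity P^`(); last by rewrite P0 deriv0.
  by rewrite raddf_sum; apply: eq_bigr => j _; rewrite [RHS]derivZ deriv_antideriv.
move=> /(congr1 (horner^~ (tau _))) vtau.
by apply/matrixP => k i; rewrite ord1 mxE -(horner_lagrange_comb (v ^~ 0) k) vtau horner0.
Qed.

End Collocation.

Lemma C_opE (R : realType) L M N mu (Q : 'M[R]_M) (A : 'M[R[i]]_N) :
  C_op L mu Q A = (1%:M - EH R L M N) - (mu%:C)%C *: ((cmx 1%:M *t cmx Q) *t A).
Proof. by rewrite /C_op addrAC. Qed.

Lemma stiff_part_unitmx (R : realType) L M N (Q : 'M[R]_M) (A : 'M[R[i]]_N) :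
  Q \in unitmx -> A \in unitmx -> (cmx (1%:M : 'M[R]_L) *t cmx Q) *t A \in unitmx.
Proof. by move=> Qu Au; rewrite !tensmx_unitmx // /cmx map_unitmx ?unitmx1. Qed.

Theorem lemma3 (R : realType) (L M N Mt Nt : nat)
  (tau : 'I_M -> R) (QD : 'M[R]_Mt)
  (A : 'M[R[i]]_N) (At : 'M[R[i]]_Nt)
  (TQFC : 'M[R]_(Mt, M)) (TAFC : 'M[R]_(Nt, N))
  (TQCF : 'M[R]_(M, Mt)) (TACF : 'M[R]_(N, Nt))
  (nu : 'cV[R[i]]_(L * M * N) -> R) :
  (0 < L)%N -> (0 < M)%N -> (0 < N)%N ->
  (Mt <= M)%N -> (Nt <= N)%N ->
  right_radau_nodes tau ->
  is_trig_mx QD -> QD \in unitmx ->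
  A \in unitmx -> At \in unitmx ->
  EH R L Mt Nt *m transfer L TQFC TAFC = transfer L TQFC TAFC *m EH R L M N ->
  is_vnorm nu ->
  exists mustar c : R, 0 < mustar /\ 0 < c /\
    forall mu : R, mustar <= mu ->
      C_op L mu (colloc_Q tau) A \in unitmx /\
      C_op L mu QD At \in unitmx /\
      induced_norm nu
        (invmx (C_op L mu (colloc_Q tau) A)
         - transfer L TQCF TACF *m invmx (C_op L mu QD At)
             *m transfer L TQFC TAFC)
      <= c / mu.
Proof.
move=> _ _ _ _ _ tauP _ QDu Au Atu _ nuP.
have [mu0 [c [mu0_gt0 c_gt0 bound]]] := coarse_correction_bound
  (1%:M - EH R L M N) (1%:M - EH R L Mt Nt) (transfer L TQCF TACF) (transfer L TQFC TAFC)
  (stiff_part_unitmx L (colloc_Q_unitmx tauP) Au) (stiff_part_unitmx L QDu Atu).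
have [e e_gt0 induced_le] := induced_norm_le_vnorm1 nuP.
exists mu0, (e * c); split=> //; split=> [|mu mu_ge]; first exact: mulr_gt0.
have [C1u C2u vnorm1_le] := bound mu mu_ge.
rewrite !C_opE -mulrA; split=> //; split=> //.
apply: induced_le _ _ _ vnorm1_le.
by rewrite divr_ge0 ?ltW // (lt_le_trans mu0_gt0 mu_ge).
Qed.
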